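(* Let $d\in\mathbb N\cup\{\infty\}$, $C>0$, and let ${\boldsymbol\gamma}$ be POD weights with constants $a,C_a$. Put $c:=\sum_{w\in\mathcal U_d}(|w|!)^a\prod_{j\in w}(2^aC^2\gamma_j)\in[1,\infty]$. (1) If ${\boldsymbol\gamma}\in\mathcal S_{d,C}$, then ${\boldsymbol\eta}\le T^\uparrow_{d,C}{\boldsymbol\gamma}\le c\,{\boldsymbol\xi}$, where $\eta_u=C^{2|u|}\gamma_u$ and $\xi_u=C_a(|u|!)^a\prod_{j\in u}(2^aC^2\gamma_j)$. (2) If ${\boldsymbol\gamma}\in\mathcal M_d$, then $\mathbf 0\le T^\downarrow_{d,C}{\boldsymbol\gamma}\le{\boldsymbol\zeta}$, where $\zeta_u=C^{-2|u|}\gamma_u$.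
   Context: Write $[d]=\{1,\dots,d\}$ if $d\in\mathbb N$ and $[d]=\mathbb N$ if $d=\infty$; $[s]=\{1,\dots,s\}$. $\mathcal U_d$ is the set of finite subsets of $[d]$; weights are families $(\gamma_u)_{u\in\mathcal U_d}$ of non-negative reals ($\mathcal W_d$), compared componentwise; $\mathbf 0$ is the zero family. POD weights: $\gamma_u=\Gamma_{|u|}\prod_{j\in u}\gamma_j$ for a non-increasing sequence $(\gamma_j)_{j\in[d]}$ of non-negative reals and non-negative reals $(\Gamma_k)_{k\in[d]\cup\{0\}}$ with $\Gamma_k\le C_a(k!)^a$ for all $k$, for some constants $a,C_a>0$. $(\Delta_v{\boldsymbol\gamma})_u=\sum_{w\subseteq v}(-1)^{|w|}\gamma_{u\cup w}$; $\mathcal M_d$ is the set of weights with $\Delta_v{\boldsymbol\gamma}\ge\mathbf 0$ for all $v$. For $C>0$: $\mathcal S_{d,C}=\{{\boldsymbol\gamma}\in\mathcal W_d:\sum_vC^{2|v|}\gamma_v<\infty\}$; $(T^\uparrow_{d,C}{\boldsymbol\gamma})_u=\sum_{v\supseteq u}C^{2|v|}\gamma_v$ on $\mathcal S_{d,C}$; on $\mathcal M_d$, $(T^\downarrow_{d,C}{\boldsymbol\gamma})_u=C^{-2|u|}(\Delta_{[d]\setminus u}{\boldsymbol\gamma})_u$ if $d\in\mathbb N$ and $C^{-2|u|}\lim_{s\to\infty}(\Delta_{[s]\setminus u}{\boldsymbol\gamma})_u$ if $d=\infty$. *)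

From HB Require Import structures.
From mathcomp Require Import all_boot all_order all_algebra.
From mathcomp Require Import finmap.
From mathcomp Require Import all_classical all_reals all_analysis.
Set Implicit Arguments. Unset Strict Implicit. Unset Printing Implicit Defensive.
Import Order.TTheory GRing.Theory Num.Theory.
Import numFieldNormedType.Exports.
Local Open Scope ring_scope.
Local Open Scope classical_set_scope.

(* d ∈ ℕ ∪ {∞} is encoded as an option nat: Some n = n, None = ∞. *)
(* Coordinates are 1-based: [d] = {1,...,d} or {1,2,3,...}. *)
Definition inD (d : option nat) (j : nat) : bool :=
  (0 < j)%N && (if d is Some n then (j <= n)%N else true).

Definition Ud (d : option nat) : set {fset nat} :=
  [set u | forall j, j \in u -> inD d j].

Definition fin_range (s : nat) : {fset nat} := seq_fset tt (iota 1 s).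

Section Weights.
Variable R : realType.

Definition Delta (g : {fset nat} -> R) (v u : {fset nat}) : R :=
  \sum_(w <- fpowerset v) (-1) ^+ #|` w| * g (u `|` w)%fset.

Definition Md (d : option nat) (g : {fset nat} -> R) : Prop :=
  forall v u, Ud d v -> Ud d u -> 0 <= Delta g v u.

Definition Sdc (d : option nat) (C : R) (g : {fset nat} -> R) : Prop :=
  (\esum_(v in Ud d) ((C ^+ (2 * #|` v|)) * g v)%:E < +oo)%E.

(* (T^↑_{d,C} γ)_u = Σ_{v ⊇ u, v ∈ U_d} C^{2|v|} γ_v  (finite when γ ∈ S_{d,C}) *)
Definition Tup (d : option nat) (C : R) (g : {fset nat} -> R) (u : {fset nat}) : R :=
  fine (\esum_(v in [set v | Ud d v /\ (u `<=` v)%fset])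
          ((C ^+ (2 * #|` v|)) * g v)%:E).

Definition Tdown (d : option nat) (C : R) (g : {fset nat} -> R) (u : {fset nat}) : R :=
  C ^- (2 * #|` u|) *
  (match d with
   | Some n => Delta g (fin_range n `\` u)%fset u
   | None => limn (fun s : nat => Delta g (fin_range s `\` u)%fset u)
   end).

Definition POD (d : option nat) (a Ca : R) (gs Gam : nat -> R)
    (g : {fset nat} -> R) : Prop :=
  [/\ 0 < a /\ 0 < Ca,
      (forall j, inD d j -> 0 <= gs j),
      (forall i j, inD d i -> inD d j -> (i <= j)%N -> gs j <= gs i),
      (forall k, (if d is Some n then (k <= n)%N else true) ->
                 0 <= Gam k /\ Gam k <= Ca * (k`!%:R `^ a)) &
      (forall u, Ud d u -> g u = Gam #|` u| * \prod_(j <- u) gs j)].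

End Weights.

From HB Require Import structures.
From mathcomp Require Import all_boot all_order all_algebra.
From mathcomp Require Import finmap.
From mathcomp Require Import all_classical all_reals all_analysis.
Import Order.TTheory GRing.Theory Num.Theory.
Import numFieldNormedType.Exports.

Set Implicit Arguments.
Unset Strict Implicit.
Unset Printing Implicit Defensive.
Local Open Scope ring_scope.
Local Open Scope classical_set_scope.

(* (1) Every v ⊇ u in U_d is u ⊎ w with w disjoint from u. The POD form of
   γ_v together with (m+k)! <= 2^(m+k) m! k! bounds C^(2|v|) γ_v by ξ_u
   times the w-th summand of c, and summing over w gives T^↑γ_u <= c ξ_u;
   the term v = u gives the lower bound.
   (2) Δ_{v ∪ {j}} γ_u = Δ_v γ_u - Δ_v γ_{u ∪ {j}}, so on M_d the map
   v ↦ Δ_v γ_u is nonnegative and nonincreasing, hence bounded by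
   Δ_∅ γ_u = γ_u; for d = ∞ the limit defining T^↓ inherits these bounds. *)

Local Open Scope fset_scope.

Lemma Ud_fsubset d (v w : {fset nat}) : Ud d w -> v `<=` w -> Ud d v.
Proof. by move=> Uw /fsubsetP vw j /vw /Uw. Qed.

Lemma Ud_fsetU d (u w : {fset nat}) : Ud d u -> Ud d w -> Ud d (u `|` w).
Proof. by move=> Uu Uw j; rewrite inE => /orP[/Uu|/Uw]. Qed.

Lemma Ud_fsetU1 d (u : {fset nat}) j : inD d j -> Ud d u -> Ud d (j |` u).
Proof. by move=> dj Uu y; rewrite !inE => /orP[/eqP ->|/Uu]. Qed.

Lemma in_fin_range s j : (j \in fin_range s) = (0 < j <= s)%N.
Proof. by rewrite /fin_range seq_fsetE mem_iota add1n ltnS. Qed.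

Lemma card_fin_range s : #|` fin_range s| = s.
Proof.
by rewrite -[LHS]/(size (seq_fset tt (iota 1 s))) size_seq_fset
  undup_id ?iota_uniq // size_iota.
Qed.

Lemma Ud_card d (v : {fset nat}) :
  Ud d v -> if d is Some n then (#|` v| <= n)%N else true.
Proof.
case: d => // n Uv; rewrite -[n]card_fin_range; apply: fsubset_leq_card.
by apply/fsubsetP => j /Uv; rewrite in_fin_range.
Qed.

Lemma Ud_fin_rangeD d s (u : {fset nat}) :
  (if d is Some n then (s <= n)%N else true) -> Ud d (fin_range s `\` u).
Proof.
move=> sd j; rewrite !inE in_fin_range => /andP[_ /andP[j0 js]].
by rewrite /inD j0; case: d sd => // n; apply: leq_trans.
Qed.

Lemma big_fsetU_disjoint (T : Type) (idx : T) (op : Monoid.com_law idx)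
    (I : choiceType) (A B : {fset I}) (F : I -> T) : [disjoint A & B] ->
  \big[op/idx]_(i <- A `|` B) F i =
    op (\big[op/idx]_(i <- A) F i) (\big[op/idx]_(i <- B) F i).
Proof.
move=> /fdisjointP AB; rewrite (big_fsetID _ (mem A)) /=; congr (op _ _).
  by apply: eq_fbigl => i; rewrite !inE /=; case: (i \in A); rewrite ?andbF.
apply: eq_fbigl => i; rewrite !inE /=.
by case Ai: (i \in A); rewrite ?andbT //= (negbTE (AB _ Ai)).
Qed.

Lemma cardfsU_disjoint (K : choiceType) (A B : {fset K}) : [disjoint A & B] ->
  #|` A `|` B| = (#|` A| + #|` B|)%N.
Proof. by move=> /eqP AB; rewrite cardfsU AB cardfs0 subn0. Qed.

Section Differences.
Variable R : realType.
Implicit Types (g : {fset nat} -> R) (u v : {fset nat}).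

Lemma Delta_fset0 g u : Delta g fset0 u = g u.
Proof. by rewrite /Delta fpowerset0 big_seq_fset1 cardfs0 expr0 mul1r fsetU0. Qed.

Lemma fpowersetU1_mem (v : {fset nat}) j : j \notin v ->
  [fset w in fpowerset (j |` v) | j \in w] = [fset j |` w | w in fpowerset v].
Proof.
move=> jv; apply/fsetP => x; rewrite !inE; apply/andP/imfsetP.
  move=> [/[!fpowersetE] /fsubsetP xv jx]; exists (x `\ j); last by rewrite fsetD1K.
  rewrite fpowersetE; apply/fsubsetP => y /[!inE] /andP[yj /xv].
  by rewrite !inE (negbTE yj).
move=> [w /=]; rewrite !fpowersetE => wv ->; split; last by rewrite fset1U1.
by rewrite fsetUS.
Qed.

Lemma Delta_fsetU1 g v u j : j \notin v ->
  Delta g (j |` v) u = Delta g v u - Delta g v (j |` u).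
Proof.
move=> jv; rewrite /Delta (big_fsetID _ (fun w : {fset nat} => j \in w)) /= addrC.
congr (_ + _)%R.
  apply: eq_fbigl => w; rewrite !inE !fpowersetE.
  apply/andP/idP => [[/fsubsetP wv jw]|/fsubsetP wv].
    apply/fsubsetP => y yw; have := wv _ yw; rewrite !inE => /orP[/eqP yj|//].
    by move: jw; rewrite -yj yw.
  split; first by apply/fsubsetP => y /wv yv; rewrite inE yv orbT.
  by apply: contra jv => /wv.
have jw (w : {fset nat}) : w \in fpowerset v -> j \notin w.
  by rewrite fpowersetE => /fsubsetP wv; apply: contra jv => /wv.
rewrite fpowersetU1_mem // big_imfset /=; last first.
  move=> w1 w2 /jw j1 /jw j2 /fsetP e; apply/fsetP => y; have := e y.
  rewrite !inE; case: (eqVneq y j) => [->|//] _.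
  by rewrite (negbTE j1) (negbTE j2).
rewrite -sumrN; apply: eq_big_seq => w /jw jnw.
by rewrite cardfsU1 jnw exprS mulN1r mulNr fsetUA [u `|` _]fsetUC.
Qed.

Variables (d : option nat) (g : {fset nat} -> R).
Hypothesis Mg : Md d g.

Lemma Delta_fsetU1_le v u j : inD d j -> j \notin v -> Ud d v -> Ud d u ->
  Delta g (j |` v) u <= Delta g v u.
Proof.
move=> dj jv Uv Uu; rewrite Delta_fsetU1 // gerBl.
by apply: Mg => //; apply: Ud_fsetU1.
Qed.

Lemma Delta_bounds v u : Ud d v -> Ud d u -> 0 <= Delta g v u <= g u.
Proof.
move=> Uv Uu; rewrite Mg //=.
have [n] := ubnP #|` v|; elim: n v Uv => // n IH v Uv /ltnSE vn.
have [->|[j jv]] := fset_0Vmem v; first by rewrite Delta_fset0.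
have Uv' : Ud d (v `\ j) by apply: Ud_fsubset Uv (fsubsetDl _ _).
rewrite -(fsetD1K jv); apply: le_trans (IH _ Uv' _).
  by apply: Delta_fsetU1_le; rewrite ?fsetD11 ?(Uv j).
by move: vn; rewrite (cardfsD1 j v) jv.
Qed.

End Differences.

Section Tdown.
Variable R : realType.
Implicit Types (g : {fset nat} -> R) (u : {fset nat}).

Lemma fin_rangeSD s u : fin_range s.+1 `\` u =
  if s.+1 \in u then fin_range s `\` u else s.+1 |` (fin_range s `\` u).
Proof.
apply/fsetP => y; case: ifP => su; rewrite !inE !in_fin_range (leq_eqVlt y) ltnS;
  by case: (eqVneq y s.+1) => [->|] /=; rewrite ?su.
Qed.

Lemma Delta_fin_range_nonincreasing g u : Md None g -> Ud None u ->
  nonincreasing_seq (fun s => Delta g (fin_range s `\` u) u).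
Proof.
move=> Mg Uu; apply/nonincreasing_seqP => s; rewrite fin_rangeSD.
case: ifP => // _; apply: (Delta_fsetU1_le Mg) => //.
  by rewrite !inE in_fin_range ltnn !andbF.
exact: (@Ud_fin_rangeD None).
Qed.

Lemma limn_Delta_fin_range_bounds g u : Md None g -> Ud None u ->
  0 <= limn (fun s => Delta g (fin_range s `\` u) u) <= g u.
Proof.
move=> Mg Uu; set D := fun s => _.
have D_bounds s : 0 <= D s <= g u.
  by apply: (Delta_bounds Mg) => //; apply: (@Ud_fin_rangeD None).
have cvgD : cvgn D.
  apply: nonincreasing_is_cvgn; first exact: Delta_fin_range_nonincreasing.
  by exists 0 => _ [s _ <-]; case/andP: (D_bounds s).
apply/andP; split; [apply: limr_ge|apply: limr_le] => //; near=> s;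
  by case/andP: (D_bounds s).
Unshelve. all: by end_near.
Qed.

Lemma Tdown_bounds d C g u : 0 < C -> Md d g -> Ud d u ->
  0 <= Tdown d C g u /\ Tdown d C g u <= C ^- (2 * #|` u|) * g u.
Proof.
move=> C0 Mg Uu; have Cu : 0 <= C ^- (2 * #|` u|) by rewrite invr_ge0 exprn_ge0 ?ltW.
rewrite /Tdown; set D := match d with Some _ => _ | None => _ end.
suff /andP[D0 Dg] : 0 <= D <= g u by rewrite mulr_ge0 // ler_wpM2l.
case: d Mg Uu @D => [n|] Mg Uu; last exact: limn_Delta_fin_range_bounds.
by apply: (Delta_bounds Mg) => //; apply: (@Ud_fin_rangeD (Some n)).
Qed.

End Tdown.

Lemma bin_le_exp2 n k : ('C(n, k) <= 2 ^ n)%N.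
Proof.
elim: n k => [|n IH] [|k] //=; first by rewrite expn_gt0.
by rewrite binS expnS mul2n -addnn leq_add.
Qed.

Lemma fact_addn_le m k : ((m + k)`! <= 2 ^ (m + k) * (m`! * k`!))%N.
Proof.
rewrite -[in leqLHS](bin_fact (leq_addr k m)) addKn.
by rewrite leq_mul2r bin_le_exp2 orbT.
Qed.

Section RealFacts.
Variable R : realType.

Lemma prodr_const_seq (I : Type) (s : seq I) (x : R) : \prod_(i <- s) x = x ^+ size s.
Proof. by elim: s => [|i s IH]; rewrite ?big_nil ?big_cons ?IH ?exprS. Qed.

Lemma powR_exprn (x a : R) n : 0 <= x -> (x ^+ n) `^ a = (x `^ a) ^+ n.
Proof.
move=> x0; elim: n => [|n IH]; first by rewrite !expr0 powR1.
by rewrite !exprS powRM ?exprn_ge0 // IH.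
Qed.

Lemma powR_fact_addn_le (a : R) m k : 0 <= a ->
  (m + k)`!%:R `^ a <= (2 `^ a) ^+ (m + k) * (m`!%:R `^ a * k`!%:R `^ a).
Proof.
move=> a0; rewrite -powR_exprn // -!powRM ?mulr_ge0 ?exprn_ge0 //.
apply: ge0_ler_powR; rewrite ?nnegrE //.
by rewrite -natrM -natrX -natrM ler_nat fact_addn_le.
Qed.

Local Open Scope ereal_scope.

Lemma le_esum_subset (T : choiceType) (A B : set T) (F : T -> \bar R) :
  (A `<=` B)%classic -> (forall i, B i -> 0 <= F i) ->
  \esum_(i in A) F i <= \esum_(i in B) F i.
Proof.
move=> AB F0; rewrite [leLHS]esum_mkcond [leRHS]esum_mkcond.
apply: le_esum => i _; case: ifPn => [/set_mem/AB Bi|_]; first by rewrite mem_set.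
by case: ifPn => // /set_mem /F0.
Qed.

Lemma esumZl_le (T : choiceType) (D : set T) (r : R) (F : T -> \bar R) :
  (0 <= r)%R -> (forall i, D i -> 0 <= F i) ->
  \esum_(i in D) (r%:E * F i) <= r%:E * \esum_(i in D) F i.
Proof.
move=> r0 F0; apply: ge_ereal_sup => _ [X [finX XD] <-].
rewrite fsbig_finite // big_seq -ge0_sume_distrr; last first.
  by move=> i; rewrite in_fset_set // inE => /XD /F0.
rewrite -big_seq -fsbig_finite //; apply: lee_wpmul2l; first by rewrite lee_fin.
by apply: ereal_sup_ubound; exists X.
Qed.

End RealFacts.

Definition Ud_disjoint d (u : {fset nat}) : set {fset nat} :=
  [set w | Ud d w /\ [disjoint u & w]%fset].

Lemma supersets_as_disjoint_fsetU d (u : {fset nat}) : Ud d u ->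
  [set v | Ud d v /\ u `<=` v] = ((fsetU u) @` Ud_disjoint d u)%classic.
Proof.
move=> Uu; apply/seteqP; split=> [v [Uv uv]|_ [w [Uw uw] <-]].
  exists (v `\` u); last by rewrite fsetUDl fsetDv fsetD0; apply/fsetUidPr.
  split; first exact: Ud_fsubset Uv (fsubsetDl _ _).
  by apply/fdisjointP => y yu; rewrite inE yu.
by split; [apply: Ud_fsetU|apply: fsubsetUl].
Qed.

Lemma set_inj_fsetU_disjoint d (u : {fset nat}) :
  set_inj (Ud_disjoint d u) (fsetU u).
Proof.
move=> w1 w2 /set_mem[_ uw1] /set_mem[_ uw2] /fsetP e; apply/fsetP => y.
have := e y; rewrite !inE; case: (boolP (y \in u)) => //= yu _.
by rewrite (negbTE (fdisjointP uw1 _ yu)) (negbTE (fdisjointP uw2 _ yu)).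
Qed.

Section PODweights.
Variables (R : realType) (d : option nat) (C a Ca : R) (gs Gam : nat -> R).
Variable g : {fset nat} -> R.
Hypotheses (C0 : 0 < C) (PODg : POD d a Ca gs Gam g).

(* κ_w, so that ξ_u = C_a κ_u and c = Σ_{w ∈ U_d} κ_w. *)
Definition kappa (w : {fset nat}) : R :=
  (#|` w|)`!%:R `^ a * \prod_(j <- w) (2 `^ a * C ^+ 2 * gs j).

Let Ca0 : 0 < Ca. Proof. by case: PODg => -[]. Qed.

Lemma POD_seq_prod_ge0 w : Ud d w -> 0 <= \prod_(j <- w) gs j.
Proof.
by case: PODg => _ gs0 _ _ _ Uw; rewrite big_seq prodr_ge0 // => j /Uw /gs0.
Qed.

Lemma POD_Gam_bound w : Ud d w ->
  0 <= Gam #|` w| /\ Gam #|` w| <= Ca * (#|` w|)`!%:R `^ a.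
Proof. by case: PODg => _ _ _ Gb _ /Ud_card /Gb. Qed.

Lemma POD_ge0 w : Ud d w -> 0 <= g w.
Proof.
move=> Uw; have [G0 _] := POD_Gam_bound Uw.
by case: PODg => _ _ _ _ gE; rewrite gE // mulr_ge0 // POD_seq_prod_ge0.
Qed.

Lemma kappaE w : kappa w =
  (#|` w|)`!%:R `^ a * ((2 `^ a) ^+ #|` w| * (C ^+ 2) ^+ #|` w|) * \prod_(j <- w) gs j.
Proof. by rewrite /kappa !big_split /= !prodr_const_seq expr2 exprMn !mulrA. Qed.

Lemma kappa_ge0 w : Ud d w -> 0 <= kappa w.
Proof.
by move=> Uw; rewrite kappaE !mulr_ge0 ?exprn_ge0 ?powR_ge0 ?POD_seq_prod_ge0 ?ltW.
Qed.

Lemma POD_fsetU_le u w : Ud d u -> Ud d w -> [disjoint u & w]%fset ->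
  C ^+ (2 * #|` u `|` w|) * g (u `|` w) <= Ca * kappa u * kappa w.
Proof.
move=> Uu Uw uw; have Uuw := Ud_fsetU Uu Uw.
case: PODg => -[a0 _] _ _ _ gE; rewrite gE // !kappaE.
have [G0 Gle] := POD_Gam_bound Uuw.
rewrite cardfsU_disjoint // big_fsetU_disjoint //= in G0 Gle *.
set m := #|` u| in G0 Gle *; set k := #|` w| in G0 Gle *.
have Gle' : Gam (m + k)%N <=
    Ca * ((2 `^ a) ^+ (m + k) * (m`!%:R `^ a * k`!%:R `^ a)).
  by apply: le_trans Gle _; rewrite ler_wpM2l ?(ltW Ca0) // powR_fact_addn_le // ltW.
have Cmk : 0 <= C ^+ (2 * (m + k)) by rewrite exprn_ge0 ?ltW.
have Pu := POD_seq_prod_ge0 Uu; have Pw := POD_seq_prod_ge0 Uw.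
apply: le_trans (_ : C ^+ (2 * (m + k)) *
    (Ca * ((2 `^ a) ^+ (m + k) * (m`!%:R `^ a * k`!%:R `^ a)) *
     (\prod_(j <- u) gs j * \prod_(j <- w) gs j)) <= _).
  by rewrite ler_wpM2l // ler_wpM2r ?mulr_ge0.
by rewrite exprM !exprD !mulrA [leLHS](ACl (3*6*4*1*8*7*5*2*9))%AC.
Qed.

Local Open Scope ereal_scope.

Lemma Tup_esum u : Sdc d C g -> (Tup d C g u)%:E =
  \esum_(v in [set v | Ud d v /\ u `<=` v]) (C ^+ (2 * #|` v|) * g v)%:E.
Proof.
move=> Sg; set E := \esum_(v in _) _.
have h0 v : Ud d v -> 0 <= (C ^+ (2 * #|` v|) * g v)%:E.
  by move=> Uv; rewrite lee_fin mulr_ge0 ?POD_ge0 ?exprn_ge0 ?ltW.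
have E0 : 0 <= E by apply: esum_ge0 => x [Ux _]; apply: h0.
have Eoo : E < +oo by apply: le_lt_trans Sg; apply: le_esum_subset => // x [].
by rewrite /Tup fineK // ge0_fin_numE.
Qed.

Lemma Tup_ge u : Sdc d C g -> Ud d u -> (C ^+ (2 * #|` u|) * g u <= Tup d C g u)%R.
Proof.
move=> Sg Uu; rewrite -lee_fin Tup_esum //; apply: esum_ge; exists [set u].
  by split; [exact: finite_set1|move=> v ->; split; rewrite ?fsubset_refl].
by rewrite fsbig_set1.
Qed.

Lemma Tup_le u : Sdc d C g -> Ud d u ->
  (Tup d C g u)%:E <= (\esum_(w in Ud d) (kappa w)%:E) * (Ca * kappa u)%:E.
Proof.
move=> Sg Uu; have Cku : (0 <= Ca * kappa u)%R by rewrite mulr_ge0 ?kappa_ge0 ?ltW.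
rewrite Tup_esum // supersets_as_disjoint_fsetU // esum_image //; last first.
  exact: set_inj_fsetU_disjoint.
apply: (@le_trans _ _
  (\esum_(w in Ud_disjoint d u) ((Ca * kappa u)%:E * (kappa w)%:E))).
  by apply: le_esum => w [Uw uw]; rewrite -EFinM lee_fin POD_fsetU_le.
apply: le_trans (esumZl_le (F := fun w => (kappa w)%:E) Cku _) _.
  by move=> w [Uw _]; rewrite lee_fin kappa_ge0.
rewrite [leRHS]muleC; apply: lee_wpmul2l; first by rewrite lee_fin.
by apply: le_esum_subset => [w []|w Uw] //; rewrite lee_fin kappa_ge0.
Qed.

End PODweights.

Theorem mainTheorem9 (R : realType) (d : option nat) (C a Ca : R)
    (gs Gam : nat -> R) (g : {fset nat} -> R) :
  0 < C -> POD d a Ca gs Gam g ->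
  let c : \bar R :=
    (\esum_(w in Ud d)
       (((#|` w|)`!%:R `^ a) * \prod_(j <- w) (2 `^ a * C ^+ 2 * gs j))%:E)%E in
  (Sdc d C g ->
     forall u, Ud d u ->
       C ^+ (2 * #|` u|) * g u <= Tup d C g u /\
       ((Tup d C g u)%:E <=
          c * (Ca * ((#|` u|)`!%:R `^ a) *
                 \prod_(j <- u) (2 `^ a * C ^+ 2 * gs j))%:E)%E) /\
  (Md d g ->
     forall u, Ud d u ->
       0 <= Tdown d C g u /\ Tdown d C g u <= C ^- (2 * #|` u|) * g u).
Proof.
move=> C0 PODg c; split=> [Sg u Uu|Mg u Uu]; last exact: Tdown_bounds.
split; first exact (Tup_ge C0 PODg Sg Uu).
by rewrite -[X in (_ * X%:E)%E]mulrA; exact (Tup_le C0 PODg Sg Uu).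
Qed.
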